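(* For every $x\in\mathbb R\setminus\{0\}$, $$\exp\Big(\frac{x^2}2-\frac{x^4}{12}\Big)<\cosh(x)<\Big(1+\frac{x^2}3\Big)\exp\Big(\frac{x^2}6\Big).$$ *)

From Stdlib Require Import Reals.

(* Both bounds compare ln (cosh x) with an explicit function vanishing at 0.
   Differentiating and clearing the denominator cosh x, each comparison of
   derivatives becomes an inequality between polynomial combinations of
   sinh x and cosh x, and each of those has a derivative that is visibly
   positive for x > 0, again by an earlier such inequality. Evenness reduces
   the case x < 0 to x > 0. *)

From Stdlib Require Import Reals Lra Psatz.
From Coquelicot Require Import Coquelicot.
Open Scope R_scope.

Lemma derive_pos_lt (f f' : R -> R) (a b : R) : a < b ->
  (forall c, a <= c <= b -> is_derive f c (f' c)) ->
  (forall c, a < c < b -> 0 < f' c) -> f a < f b.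
Proof.
intros hab hf hf'.
destruct (MVT_cor2 f f' a b hab) as [c [hmvt hc]].
- intros c hc; apply is_derive_Reals, hf, hc.
- assert (0 < f' c * (b - a)) by (apply Rmult_lt_0_compat; [apply hf'|]; lra).
  lra.
Qed.

Lemma cosh_pos (x : R) : 0 < cosh x.
Proof. unfold cosh; generalize (exp_pos x) (exp_pos (- x)); lra. Qed.

Lemma sinh_pos (x : R) : 0 < x -> 0 < sinh x.
Proof. intros hx; rewrite <- sinh_0; apply sinh_lt, hx. Qed.

Lemma sinh_lt_mul_cosh (x : R) : 0 < x -> sinh x < x * cosh x.
Proof.
intros hx.
enough (hlt : 0 * cosh 0 - sinh 0 < x * cosh x - sinh x)
  by (rewrite sinh_0 in hlt; lra).
apply (derive_pos_lt (fun t => t * cosh t - sinh t) (fun t => t * sinh t));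
  [exact hx | intros c _; auto_derive; [easy | ring] |].
intros c hc; apply Rmult_lt_0_compat; [| apply sinh_pos]; lra.
Qed.

Lemma mul_cosh_lt_sinh (x : R) : 0 < x -> (x - x ^ 3 / 3) * cosh x < sinh x.
Proof.
intros hx.
enough (hlt : sinh 0 - (0 - 0 ^ 3 / 3) * cosh 0 < sinh x - (x - x ^ 3 / 3) * cosh x)
  by (rewrite sinh_0 in hlt; lra).
apply (derive_pos_lt (fun t => sinh t - (t - t ^ 3 / 3) * cosh t)
         (fun t => t * (t * cosh t - sinh t) + t ^ 3 / 3 * sinh t));
  [exact hx | intros c _; auto_derive; [easy | field] |].
intros c hc.
assert (0 < c * (c * cosh c - sinh c))
  by (apply Rmult_lt_0_compat; [| generalize (sinh_lt_mul_cosh c)]; lra).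
assert (0 < c ^ 3 / 3 * sinh c)
  by (apply Rmult_lt_0_compat; [generalize (pow_lt c 3) | apply sinh_pos]; lra).
lra.
Qed.

(* tanh x lies below its Pade approximant x (9 + x^2) / (3 (3 + x^2)). *)
Lemma sinh_lt_pade (x : R) : 0 < x ->
  3 * (3 + x ^ 2) * sinh x < x * (9 + x ^ 2) * cosh x.
Proof.
intros hx.
enough (hlt : 0 * (9 + 0 ^ 2) * cosh 0 - 3 * (3 + 0 ^ 2) * sinh 0
              < x * (9 + x ^ 2) * cosh x - 3 * (3 + x ^ 2) * sinh x)
  by (rewrite sinh_0 in hlt; lra).
apply (derive_pos_lt (fun t => t * (9 + t ^ 2) * cosh t - 3 * (3 + t ^ 2) * sinh t)
         (fun t => t * (3 + t ^ 2) * sinh t));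
  [exact hx | intros c _; auto_derive; [easy | ring] |].
intros c hc; apply Rmult_lt_0_compat; [| apply sinh_pos; lra].
apply Rmult_lt_0_compat; [| generalize (pow2_ge_0 c)]; lra.
Qed.

Lemma ln_cosh_lower (x : R) : 0 < x -> x ^ 2 / 2 - x ^ 4 / 12 < ln (cosh x).
Proof.
intros hx.
enough (hlt : ln (cosh 0) - (0 ^ 2 / 2 - 0 ^ 4 / 12)
              < ln (cosh x) - (x ^ 2 / 2 - x ^ 4 / 12))
  by (rewrite cosh_0, ln_1 in hlt; lra).
apply (derive_pos_lt (fun t => ln (cosh t) - (t ^ 2 / 2 - t ^ 4 / 12))
         (fun t => (sinh t - (t - t ^ 3 / 3) * cosh t) / cosh t)); [exact hx | |].
- intros c _; generalize (cosh_pos c); intros hc.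
  auto_derive; [exact hc | field; lra].
- intros c hc; apply Rdiv_lt_0_compat; [| apply cosh_pos].
  generalize (mul_cosh_lt_sinh c); lra.
Qed.

Lemma ln_cosh_upper (x : R) : 0 < x -> ln (cosh x) < ln (1 + x ^ 2 / 3) + x ^ 2 / 6.
Proof.
intros hx.
enough (hlt : ln (1 + 0 ^ 2 / 3) + 0 ^ 2 / 6 - ln (cosh 0)
              < ln (1 + x ^ 2 / 3) + x ^ 2 / 6 - ln (cosh x)).
{ replace (1 + 0 ^ 2 / 3) with 1 in hlt by field.
  rewrite cosh_0, ln_1 in hlt; lra. }
apply (derive_pos_lt (fun t => ln (1 + t ^ 2 / 3) + t ^ 2 / 6 - ln (cosh t))
         (fun t => (t * (9 + t ^ 2) * cosh t - 3 * (3 + t ^ 2) * sinh t)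
                   / (3 * (3 + t ^ 2) * cosh t))); [exact hx | |].
- intros c _; generalize (cosh_pos c); intros hc.
  auto_derive; [repeat split; nra | field; repeat split; nra].
- intros c hc; generalize (cosh_pos c) (pow2_ge_0 c); intros hch hc2.
  apply Rdiv_lt_0_compat; [generalize (sinh_lt_pade c); lra |].
  apply Rmult_lt_0_compat; lra.
Qed.

Lemma cosh_bounds_pos (x : R) : 0 < x ->
  exp (x ^ 2 / 2 - x ^ 4 / 12) < cosh x /\
  cosh x < (1 + x ^ 2 / 3) * exp (x ^ 2 / 6).
Proof.
intros hx.
rewrite <- (exp_ln (cosh x) (cosh_pos x)).
assert (h1 : 0 < 1 + x ^ 2 / 3) by (generalize (pow2_ge_0 x); lra).
split.
- apply exp_increasing, ln_cosh_lower, hx.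
- rewrite <- (exp_ln _ h1), <- exp_plus.
  apply exp_increasing, ln_cosh_upper, hx.
Qed.

Lemma cosh_abs (x : R) : cosh (Rabs x) = cosh x.
Proof.
unfold Rabs; destruct (Rcase_abs x); [| reflexivity].
unfold cosh; rewrite Ropp_involutive; lra.
Qed.

Theorem lemma2p2 (x : R) (hx : x <> 0) :
  exp (x ^ 2 / 2 - x ^ 4 / 12) < cosh x /\
  cosh x < (1 + x ^ 2 / 3) * exp (x ^ 2 / 6).
Proof.
assert (h4 : x ^ 4 = Rabs x ^ 4)
  by (replace 4%nat with (2 * 2)%nat by reflexivity; rewrite !pow_mult, pow2_abs; reflexivity).
rewrite <- cosh_abs, <- pow2_abs, h4.
apply cosh_bounds_pos, Rabs_pos_lt, hx.
Qed.
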